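(* Let $\Phi$ be a channel matrix whose rows $P^1,\dots,P^4\in\Delta^n$ are in general position, let $Q^0$ be the equidistant point from $P^1,\dots,P^4$ with barycentric coordinate $\boldsymbol\lambda^0$, and suppose $\lambda^0_1<0$, $\lambda^0_2,\lambda^0_3,\lambda^0_4\ge0$. Let $Q^1=\pi(Q^0|L(P^2,P^3,P^4))$ with barycentric coordinate $\boldsymbol\lambda^1$ about $P^1,\dots,P^4$, and suppose $\lambda^1_2,\lambda^1_3,\lambda^1_4\ge0$. Then the output distribution achieving the channel capacity is $Q^\ast=Q^1$ and the channel capacity is $C=D(P^2\|Q^1)$.
   Context: $\Delta^n=\{Q:Q_j>0,\sum_jQ_j=1\}$, $\bar\Delta^m=\{\boldsymbol\lambda:\lambda_i\ge0,\sum_i\lambda_i=1\}$; $D(Q\|Q')=\sum_jQ_j\log(Q_j/Q'_j)$. Rows are in general position if $P^2-P^1,\dots,P^m-P^1$ are linearly independent. $L(S^1,\dots,S^r)=\{\sum_i\lambda_iS^i:\sum_i\lambda_i=1\}\cap\Delta^n$; for such an affine subspace $L$, $\pi(Q'|L)$ is the unique $Q\in L$ minimizing $D(Q\|Q')$. The barycentric coordinate of $Q\in L(P^1,\dots,P^m)$ is the unique $\boldsymbol\lambda$ with $\sum_i\lambda_i=1$, $Q=\sum_i\lambda_iP^i$. The equidistant point is the unique $Q^0\in L(P^1,\dots,P^m)$ with all $D(P^i\|Q^0)$ equal. Mutual information $I(\boldsymbol\lambda,\Phi)=\sum_{i,j}\lambda_iP^i_j\log(P^i_j/Q_j)$ with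 $Q=\boldsymbol\lambda\Phi$; capacity $C=\max_{\boldsymbol\lambda\in\bar\Delta^m}I(\boldsymbol\lambda,\Phi)$; the capacity-achieving output distribution is $Q^\ast=\boldsymbol\lambda^\ast\Phi$ for a maximizer $\boldsymbol\lambda^\ast$ (unique). *)

From mathcomp Require Import all_boot all_order all_algebra.
From mathcomp Require Import reals exp.
Set Implicit Arguments. Unset Strict Implicit. Unset Printing Implicit Defensive.
Import Order.TTheory GRing.Theory Num.Theory.
Local Open Scope ring_scope.

Section Defs.
Variable R : realType.

Definition in_simplex (n : nat) (Q : 'I_n -> R) : Prop :=
  (forall j, 0 < Q j) /\ \sum_(j < n) Q j = 1.

Definition in_csimplex (m : nat) (l : 'I_m -> R) : Prop :=
  (forall i, 0 <= l i) /\ \sum_(i < m) l i = 1.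

Definition KL (n : nat) (Q Q' : 'I_n -> R) : R :=
  \sum_(j < n) Q j * ln (Q j / Q' j).

(* output distribution  lambda Phi  (rows of Phi are P i) *)
Definition outdist (m n : nat) (l : 'I_m -> R) (P : 'I_m -> 'I_n -> R)
  : 'I_n -> R := fun j => \sum_(i < m) l i * P i j.

(* general position: P^i - P^1 (i <> 1) linearly independent; index 0 = P^1 *)
Definition general_position (m n : nat) (P : 'I_m.+1 -> 'I_n -> R) : Prop :=
  forall c : 'I_m.+1 -> R,
    (forall j, \sum_(i < m.+1 | i != ord0) c i * (P i j - P ord0 j) = 0) ->
    forall i, i != ord0 -> c i = 0.

Definition barycentric (m n : nat) (P : 'I_m -> 'I_n -> R)
  (Q : 'I_n -> R) (l : 'I_m -> R) : Prop :=
  \sum_(i < m) l i = 1 /\ Q = outdist l P.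

Definition in_affL (m n : nat) (P : 'I_m -> 'I_n -> R) (A : pred 'I_m)
  (Q : 'I_n -> R) : Prop :=
  in_simplex Q /\
  exists l : 'I_m -> R, (forall i, ~~ A i -> l i = 0) /\
    \sum_(i < m) l i = 1 /\ Q = outdist l P.

Definition is_proj (m n : nat) (P : 'I_m -> 'I_n -> R) (A : pred 'I_m)
  (Q' Q : 'I_n -> R) : Prop :=
  in_affL P A Q /\ forall Q'', in_affL P A Q'' -> KL Q Q' <= KL Q'' Q'.

Definition equidistant (m n : nat) (P : 'I_m -> 'I_n -> R) (Q : 'I_n -> R) : Prop :=
  in_affL P predT Q /\ forall i k, KL (P i) Q = KL (P k) Q.

Definition mutinf (m n : nat) (l : 'I_m -> R) (P : 'I_m -> 'I_n -> R) : R :=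
  \sum_(i < m) \sum_(j < n) l i * P i j * ln (P i j / outdist l P j).

End Defs.

From mathcomp Require Import all_boot all_order all_algebra.
From mathcomp Require Import reals exp.
From mathcomp Require Import ring lra.
Import Order.TTheory GRing.Theory Num.Theory.
Local Open Scope ring_scope.

(* Let [g Q = sum_j Q j ln (Q1 j / Q0 j)], an affine function of [Q], so that
   [D(P^i || Q1) = D(P^i || Q0) - g P^i].  Optimality of the I-projection [Q1]
   gives [g P^i = D(Q1 || Q0)] for the rows i = 2, 3, 4 spanning the face, so by
   equidistance [D(P^i || Q1)] has a common value C there.  At [Q0] itself
   [g Q0 = - D(Q0 || Q1) <= 0]; as [Q0] gives [P^1] a negative weight, this forces
   [g P^1 >= D(Q1 || Q0)], i.e. [D(P^1 || Q1) <= C].  Since [Q1 = lambda^1 Phi]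
   with [lambda^1] a probability vector supported on rows 2, 3, 4, these are the
   Kuhn-Tucker conditions for capacity:
   [I(mu) = sum_i mu_i D(P^i || Q1) - D(mu Phi || Q1) <= C],
   with equality iff [mu Phi = Q1]. *)

Section ChannelCapacity.
Context {R : realType}.

Section LnInequalities.
Implicit Types a b c x s G K : R.

Lemma ln_le_subr1 {x} : 0 < x -> ln x <= x - 1.
Proof.
by move=> x0; rewrite -[x in ln x](subrK 1) addrC; apply: le_ln1Dx; lra.
Qed.

Lemma ln_lt_subr1 {x} : 0 < x -> x != 1 -> ln x < x - 1.
Proof.
move=> x0 x1; rewrite ltrBrDl -[x in _ < x]lnK ?posrE //.
by apply: expR_gt1Dx; rewrite ln_eq0.
Qed.

Lemma subr_le_mul_ln_div {a b} : 0 < a -> 0 < b -> a - b <= a * ln (a / b).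
Proof.
move=> a0 b0; have := ln_le_subr1 (divr_gt0 b0 a0).
rewrite !ln_div ?posrE // => h.
have e : a * (b / a) = b by field; rewrite gt_eqF.
nra.
Qed.

Lemma subr_lt_mul_ln_div {a b} : 0 < a -> 0 < b -> a != b -> a - b < a * ln (a / b).
Proof.
move=> a0 b0 ab; have ba1 : b / a != 1.
  by apply: contraNneq ab => /divr1_eq ->.
have := ln_lt_subr1 (divr_gt0 b0 a0) ba1.
rewrite !ln_div ?posrE // => h.
have e : a * (b / a) = b by field; rewrite gt_eqF.
nra.
Qed.

Lemma mul_ln_div_le_tangent {a b c} : 0 < a -> 0 < b -> 0 < c ->
  a * ln (a / c) <=
  b * ln (b / c) + (a - b) * (ln (b / c) + 1) + (a - b) ^+ 2 / b.
Proof.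
move=> a0 b0 c0; have := ln_le_subr1 (divr_gt0 a0 b0).
rewrite !ln_div ?posrE // => h.
have e : a * (a / b - 1) = (a - b) + (a - b) ^+ 2 / b by field; rewrite gt_eqF.
have h2 : a * (ln a - ln b) <= a * (a / b - 1) by rewrite ler_pM2l.
nra.
Qed.

Lemma linear_coef_eq0 s G K : 0 < s ->
  (forall t, - s <= t <= s -> 0 <= t * G + t ^+ 2 * K) -> G = 0.
Proof.
move=> s0 h; apply/eqP; apply: contraT => G0.
have aG : 0 < `|G| by rewrite normr_gt0.
have K1 : 0 < `|K| + 1 by have := normr_ge0 K; lra.
pose t := Num.min s (`|G| / (`|K| + 1)).
have t0 : 0 < t by rewrite lt_min s0 divr_gt0.
have ts : t <= s by rewrite ge_min lexx.
have tG : t * (`|K| + 1) <= `|G| by rewrite -ler_pdivlMr // ge_min lexx orbT.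
have tK : t ^+ 2 * K <= t ^+ 2 * `|K| by rewrite ler_wpM2l ?sqr_ge0 ?ler_norm.
have hp := h t ltac:(apply/andP; split; lra).
have hn := h (- t) ltac:(apply/andP; split; lra).
have tGK : t * `|G| <= t ^+ 2 * K.
  by case: (lerP 0 G) => G_sign; [rewrite ger0_norm | rewrite ltr0_norm];
    rewrite ?sqrrN in hn hp *; lra.
have : t * (t * (`|K| + 1)) <= t * `|G| by rewrite ler_pM2l.
rewrite expr2 in tK tGK; nra.
Qed.

End LnInequalities.

Section KullbackLeibler.
Context {n : nat}.
Implicit Types a b c : 'I_n -> R.

Lemma KL_self a : (forall j, 0 < a j) -> KL a a = 0.
Proof. by move=> a0; apply: big1 => j _; rewrite divff ?gt_eqF // ln1 mulr0. Qed.

Lemma KLBr a b c : (forall j, 0 < a j) -> (forall j, 0 < b j) -> (forall j, 0 < c j) ->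
  KL a b - KL a c = \sum_j a j * ln (c j / b j).
Proof.
move=> a0 b0 c0; rewrite -sumrB; apply: eq_bigr => j _.
by rewrite !ln_div ?posrE //; ring.
Qed.

Lemma KL_ge0 a b : (forall j, 0 < a j) -> (forall j, 0 < b j) ->
  \sum_j a j = \sum_j b j -> 0 <= KL a b.
Proof.
move=> a0 b0 ab; rewrite -(subrr (\sum_j b j)) -[X in X - _]ab -sumrB.
by apply: ler_sum => j _; apply: subr_le_mul_ln_div.
Qed.

Lemma KL_le0_eq a b : (forall j, 0 < a j) -> (forall j, 0 < b j) ->
  \sum_j a j = \sum_j b j -> KL a b <= 0 -> a = b.
Proof.
move=> a0 b0 ab KL0.
have ge0 j : true -> 0 <= a j * ln (a j / b j) - (a j - b j).
  by rewrite subr_ge0 subr_le_mul_ln_div.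
have sum0 : \sum_j (a j * ln (a j / b j) - (a j - b j)) = 0.
  apply/eqP; rewrite eq_le sumr_ge0 // andbT.
  by rewrite sumrB [X in _ - X]sumrB ab subrr subr0.
apply: boolp.funext => j; apply/eqP; apply: contraT => abj.
have := subr_lt_mul_ln_div (a0 j) (b0 j) abj.
by rewrite -subr_gt0 (psumr_eq0P ge0 sum0 (i := j) isT) ltxx.
Qed.

Lemma KL_le_tangent {a b c} :
  (forall j, 0 < a j) -> (forall j, 0 < b j) -> (forall j, 0 < c j) ->
  KL a c <= KL b c + \sum_j (a j - b j) * (ln (b j / c j) + 1)
                   + \sum_j (a j - b j) ^+ 2 / b j.
Proof.
move=> a0 b0 c0; rewrite /KL -!big_split /=.
by apply: ler_sum => j _; apply: mul_ln_div_le_tangent.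
Qed.

End KullbackLeibler.

Lemma simplex_le1 {n} {a : 'I_n -> R} j : in_simplex a -> a j <= 1.
Proof.
move=> [a0 a1]; rewrite -a1 (bigD1 j) //= lerDl.
by apply: sumr_ge0 => k _; apply: ltW.
Qed.

Section OutputDistribution.
Context {m n : nat} {P : 'I_m -> 'I_n -> R}.
Hypothesis P_simplex : forall i, in_simplex (P i).

Lemma sum_outdist_mul mu (w : 'I_n -> R) :
  \sum_j outdist mu P j * w j = \sum_i mu i * \sum_j P i j * w j.
Proof.
rewrite /outdist; under eq_bigr do rewrite mulr_suml.
rewrite exchange_big /=; apply: eq_bigr => i _.
by rewrite mulr_sumr; apply: eq_bigr => j _; rewrite mulrA.
Qed.

Lemma outdist_sum mu : \sum_i mu i = 1 -> \sum_j outdist mu P j = 1.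
Proof.
move=> mu1; rewrite /outdist exchange_big /= -mu1; apply: eq_bigr => i _.
by rewrite -mulr_sumr (P_simplex i).2 mulr1.
Qed.

Lemma outdist_gt0 {mu} : in_csimplex mu -> forall j, 0 < outdist mu P j.
Proof.
move=> [mu0 mu1] j.
have ge0 i : true -> 0 <= mu i * P i j by rewrite mulr_ge0 // ltW // (P_simplex i).1.
rewrite lt_def sumr_ge0 // andbT; apply/eqP => /(psumr_eq0P ge0) mu_P0.
have : \sum_i mu i = 0.
  apply: big1 => i _; have /eqP := mu_P0 i isT.
  by rewrite mulf_eq0 [P i j == 0]gt_eqF ?(P_simplex i).1 // orbF => /eqP.
by rewrite mu1; apply/eqP; rewrite oner_eq0.
Qed.

Lemma mutinf_KL {mu} (Q : 'I_n -> R) : in_csimplex mu -> (forall j, 0 < Q j) ->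
  mutinf mu P = \sum_i mu i * KL (P i) Q - KL (outdist mu P) Q.
Proof.
move=> mu_cs Q0; have O0 := outdist_gt0 mu_cs.
rewrite [KL (outdist _ _) _]sum_outdist_mul /mutinf -sumrB.
apply: eq_bigr => i _; rewrite /KL -mulrBr -sumrB mulr_sumr.
apply: eq_bigr => j _; have P0 := (P_simplex i).1 j.
by rewrite !ln_div ?posrE //; ring.
Qed.

Lemma mutinf_le_subKL {mu} {Q : 'I_n -> R} {C} : in_csimplex mu -> (forall j, 0 < Q j) ->
  (forall i, KL (P i) Q <= C) -> mutinf mu P <= C - KL (outdist mu P) Q.
Proof.
move=> mu_cs Q0 KL_C; rewrite (mutinf_KL Q mu_cs Q0) lerD2r.
rewrite -[C]mul1r -mu_cs.2 mulr_suml.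
by apply: ler_sum => i _; apply: ler_wpM2l; [apply: mu_cs.1 | apply: KL_C].
Qed.

Lemma capacity_KKT {lam C} : in_csimplex lam ->
  (forall i, KL (P i) (outdist lam P) <= C) ->
  (forall i, lam i != 0 -> KL (P i) (outdist lam P) = C) ->
  [/\ forall mu, in_csimplex mu -> mutinf mu P <= C,
      mutinf lam P = C &
      forall mu, in_csimplex mu -> mutinf mu P = C -> outdist mu P = outdist lam P].
Proof.
move=> lam_cs KL_C KL_supp; set Q := outdist lam P.
have Q0 : forall j, 0 < Q j := outdist_gt0 lam_cs.
have KL_Q_ge0 mu : in_csimplex mu -> 0 <= KL (outdist mu P) Q.
  move=> mu_cs; apply: KL_ge0 => //; first exact: outdist_gt0.
  by rewrite !outdist_sum ?mu_cs.2 ?lam_cs.2.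
split.
- move=> mu mu_cs; have := mutinf_le_subKL mu_cs Q0 KL_C.
  by have := KL_Q_ge0 _ mu_cs; lra.
- rewrite (mutinf_KL Q lam_cs Q0) KL_self // subr0 -[RHS]mul1r -lam_cs.2 mulr_suml.
  apply: eq_bigr => i _; have [->|/KL_supp ->//] := eqVneq (lam i) 0.
  by rewrite !mul0r.
- move=> mu mu_cs mu_C; apply: KL_le0_eq.
  + exact: outdist_gt0.
  + exact: Q0.
  + by rewrite !outdist_sum ?mu_cs.2 ?lam_cs.2.
  by have := mutinf_le_subKL mu_cs Q0 KL_C; lra.
Qed.

End OutputDistribution.

Lemma sum_delta_mul {I : finType} (i : I) (F : I -> R) :
  \sum_k (k == i)%:R * F k = F i.
Proof.
by rewrite (bigD1 i) //= eqxx mul1r big1 ?addr0 // => k /negbTE ->; rewrite mul0r.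
Qed.

Lemma general_position_outdist_inj {m n} {P : 'I_m.+1 -> 'I_n -> R} {l l'} :
  general_position P -> \sum_i l i = 1 -> \sum_i l' i = 1 ->
  outdist l P = outdist l' P -> l = l'.
Proof.
move=> gp l1 l'1 ll'; pose c i := l i - l' i.
have c_sum : \sum_i c i = 0 by rewrite sumrB l1 l'1 subrr.
have c_rows j : \sum_(i | i != ord0) c i * (P i j - P ord0 j) = 0.
  have : \sum_i c i * (P i j - P ord0 j) = 0.
    under eq_bigr do rewrite mulrBr.
    rewrite sumrB -mulr_suml c_sum mul0r subr0.
    under eq_bigr do rewrite mulrBl.
    by rewrite sumrB -/(outdist l P j) -/(outdist l' P j) ll' subrr.
  by rewrite (bigD1 ord0) //= subrr mulr0 add0r.
have c0 := gp c c_rows.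
apply: boolp.funext => i; apply/eqP; rewrite -subr_eq0; apply/eqP.
have [->|/c0 //] := eqVneq i ord0.
by move: c_sum; rewrite (bigD1 ord0) //= big1 ?addr0.
Qed.

Section AffineFamily.
Context {m n : nat} {P : 'I_m -> 'I_n -> R} {A : pred 'I_m}.
Hypothesis P_simplex : forall i, in_simplex (P i).

Lemma in_affL_segment {Q : 'I_n -> R} {i : 'I_m} {t : R} : in_affL P A Q -> A i ->
  (forall j, 0 < Q j + t * (P i j - Q j)) ->
  in_affL P A (fun j => Q j + t * (P i j - Q j)).
Proof.
move=> [[_ Q_sum] [l [lA [l_sum QE]]]] Ai Qt_gt0; split.
  split=> //; rewrite big_split /= -mulr_sumr sumrB.
  by rewrite (P_simplex i).2 Q_sum subrr mulr0 addr0.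
exists (fun k => (1 - t) * l k + t * (k == i)%:R); split; [|split].
- move=> k kA; rewrite lA // mulr0 add0r.
  by have [ki|] := eqVneq k i; [rewrite ki Ai in kA | rewrite mulr0].
- rewrite big_split /= -!mulr_sumr l_sum.
  have := sum_delta_mul i (fun=> 1); under eq_bigr do rewrite mulr1.
  by move=> ->; ring.
apply: boolp.funext => j; rewrite QE /outdist.
under [in RHS]eq_bigr do rewrite mulrDl -!mulrA.
by rewrite big_split /= -!mulr_sumr sum_delta_mul; ring.
Qed.

(* First-order optimality of the I-projection: since [Q1] is interior, it can be
   moved both towards and away from any row [P i] of the family without leaving
   it, and [D(. || Q0)] may not decrease either way. *)
Lemma is_proj_row_score {Q0 Q1 : 'I_n -> R} {i : 'I_m} : (forall j, 0 < Q0 j) ->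
  is_proj P A Q0 Q1 -> A i -> \sum_j P i j * ln (Q1 j / Q0 j) = KL Q1 Q0.
Proof.
move=> Q0_gt0 [Q1_aff Q1_min] Ai; have [[Q1_gt0 Q1_sum] _] := Q1_aff.
pose v j := P i j - Q1 j; pose G := \sum_j v j * ln (Q1 j / Q0 j).
suff : G = 0.
  rewrite /G; under eq_bigr do rewrite mulrBl.
  by rewrite sumrB => /eqP; rewrite subr_eq0 => /eqP.
have v_sum : \sum_j v j = 0 by rewrite sumrB (P_simplex i).2 Q1_sum subrr.
pose p := \big[Num.min/1]_j Q1 j.
have p_gt0 : 0 < p by apply: lt_bigmin.
have p_le1 : p <= 1 by apply: bigmin_le_id.
have p_Q1 j : p <= Q1 j by apply: bigmin_le.
apply: (@linear_coef_eq0 (p / 2) G (\sum_j v j ^+ 2 / Q1 j)); first by rewrite divr_gt0.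
move=> t /andP [t_ge t_le]; pose Qt j := Q1 j + t * v j.
have Qt_gt0 j : 0 < Qt j.
  have := simplex_le1 j (P_simplex i); have := (P_simplex i).1 j.
  have := p_Q1 j; have := Q1_gt0 j; rewrite /Qt /v.
  by case: (lerP 0 t) => t0; nra.
have := Q1_min _ (in_affL_segment Q1_aff Ai Qt_gt0).
have := KL_le_tangent Qt_gt0 Q1_gt0 Q0_gt0.
have -> : \sum_j (Qt j - Q1 j) * (ln (Q1 j / Q0 j) + 1) = t * G + t * \sum_j v j.
  by rewrite /G !mulr_sumr -big_split /=; apply: eq_bigr => j _; rewrite /Qt; ring.
have -> : \sum_j (Qt j - Q1 j) ^+ 2 / Q1 j = t ^+ 2 * \sum_j v j ^+ 2 / Q1 j.
  by rewrite mulr_sumr; apply: eq_bigr => j _; rewrite /Qt; ring.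
rewrite v_sum; lra.
Qed.

End AffineFamily.

Lemma KL_proj_rows {m n} {P : 'I_m.+1 -> 'I_n -> R} {Q0 Q1 l0 k} :
  (forall i, in_simplex (P i)) -> equidistant P Q0 -> barycentric P Q0 l0 ->
  l0 ord0 < 0 -> is_proj P (fun i => i != ord0) Q0 Q1 -> k != ord0 ->
  forall i, KL (P i) Q1 <= KL (P k) Q1 /\ (i != ord0 -> KL (P i) Q1 = KL (P k) Q1).
Proof.
move=> P_simplex [[[Q0_gt0 Q0_sum] _] equi] [l0_sum Q0E] l00 Q1_proj k0 i.
have [[[Q1_gt0 Q1_sum] _] _] := Q1_proj.
pose g (Q : 'I_n -> R) := \sum_j Q j * ln (Q1 j / Q0 j).
have g_row h : h != ord0 -> g (P h) = KL Q1 Q0.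
  by move=> h0; apply: (is_proj_row_score P_simplex Q0_gt0 Q1_proj h0).
have KL_row h : KL (P h) Q1 = KL (P k) Q0 - g (P h).
  by have Ph := (P_simplex h).1; rewrite /g -(equi h k) -KLBr //; ring.
have gQ0 : g Q0 = l0 ord0 * g (P ord0) + (1 - l0 ord0) * KL Q1 Q0.
  have l0_rest : 1 - l0 ord0 = \sum_(h | h != ord0) l0 h.
    by rewrite -l0_sum (bigD1 ord0) //= addrC addrK.
  rewrite /g {1}Q0E sum_outdist_mul (bigD1 ord0) //= l0_rest mulr_suml.
  congr (_ + _); apply: eq_bigr => h h0.
  by have := g_row h h0; rewrite /g => ->; rewrite mulrC.
have gQ0_le0 : g Q0 <= 0.
  rewrite /g -KLBr // KL_self // sub0r oppr_le0.
  by apply: KL_ge0 => //; rewrite Q0_sum Q1_sum.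
have d_ge0 : 0 <= KL Q1 Q0 by apply: KL_ge0 => //; rewrite Q0_sum Q1_sum.
have g0 : KL Q1 Q0 <= g (P ord0) by nra.
split=> [|i0]; last by rewrite !KL_row !g_row.
rewrite !KL_row lerD2l lerN2 (g_row k) //.
by have [->|/g_row ->] := eqVneq i ord0.
Qed.

End ChannelCapacity.

Theorem theorem18 (R : realType) (n : nat) (P : 'I_4 -> 'I_n -> R)
  (Q0 Q1 : 'I_n -> R) (l0 l1 : 'I_4 -> R) :
  (forall i, in_simplex (P i)) ->
  general_position P ->
  equidistant P Q0 ->
  barycentric P Q0 l0 ->
  l0 ord0 < 0 ->
  (forall i : 'I_4, i != ord0 -> 0 <= l0 i) ->
  is_proj P (fun i : 'I_4 => i != ord0) Q0 Q1 ->
  barycentric P Q1 l1 ->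
  (forall i : 'I_4, i != ord0 -> 0 <= l1 i) ->
  (* C = max_{lambda} I(lambda, Phi) = D(P^2 || Q1) *)
  (forall mu : 'I_4 -> R, in_csimplex mu -> mutinf mu P <= KL (P (@inord 3 1)) Q1) /\
  (exists lam : 'I_4 -> R, in_csimplex lam /\ mutinf lam P = KL (P (@inord 3 1)) Q1) /\
  (* every capacity-achieving input has output distribution Q1, i.e. Q* = Q1 *)
  (forall lam : 'I_4 -> R, in_csimplex lam -> mutinf lam P = KL (P (@inord 3 1)) Q1 ->
     outdist lam P = Q1).
Proof.
move=> P_simplex gp equi Q0_bary l00 _ Q1_proj [l1_sum Q1E] l1_ge0.
have [[_ [l [lA [l_sum Q1l]]]] _] := Q1_proj.
have l10 : l1 ord0 = 0.
  have -> : l1 = l by apply: general_position_outdist_inj gp _ _ _; rewrite // -Q1E.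
  by apply: lA; rewrite negbK.
have l1_cs : in_csimplex l1.
  by split=> // i; have [->|/l1_ge0] := eqVneq i ord0; rewrite ?l10.
have k0 : @inord 3 1 != ord0 :> 'I_4 by rewrite -val_eqE /= inordK.
have KL_rows := KL_proj_rows P_simplex equi Q0_bary l00 Q1_proj k0.
have l1_supp i : l1 i != 0 -> i != ord0 by apply: contra_neq => ->.
rewrite Q1E in KL_rows *.
have [cap_le cap_eq cap_uniq] := capacity_KKT P_simplex l1_cs (fun i => (KL_rows i).1)
  (fun i l1i => (KL_rows i).2 (l1_supp i l1i)).
by split; [|split; [exists l1|]].
Qed.
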